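(* Let $K_0$, $L$, $I$ be positive integers with $K_0\ge3$, $L\ge2$ and $I\ge K_0(K_0+1)/2$. Then $$\Theta(K_0,I)\ge\frac{I^2}{2(K_0+1)}\left(1+\frac{(K_0-1)(K_0+1)}{I}-\frac{K_0(K_0+2)(K_0+1)^2}{12I^2}\right).$$
   Context: For $(k,m)\in\mathbb{N}^2$ put $\|(k,m)\|=k+m$. Define $\Theta(K_0,I)=\min\{\|(k_1,m_1)\|+\cdots+\|(k_I,m_I)\|\}$, the minimum taken over all $I$-tuples of pairwise distinct pairs $(k_1,m_1),\dots,(k_I,m_I)\in\mathbb{N}^2$ with $m_1,\dots,m_I\le K_0$ ($\mathbb{N}$ includes $0$). *)

From mathcomp Require Import all_boot all_order all_algebra.
From mathcomp Require Import boolp.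
Set Implicit Arguments. Unset Strict Implicit. Unset Printing Implicit Defensive.

Definition pnorm (p : nat * nat) : nat := p.1 + p.2.

Definition admissible (K0 I : nat) (s : seq (nat * nat)) : Prop :=
  [/\ size s = I, uniq s & all (fun p => p.2 <= K0) s].

Definition Theta_val (K0 I : nat) : pred nat :=
  fun S => `[< exists s, admissible K0 I s /\ \sum_(p <- s) pnorm p = S >].

Lemma Theta_val_ex K0 I : exists S, Theta_val K0 I S.
Proof.
exists (\sum_(p <- [seq (i, 0) | i <- iota 0 I]) pnorm p).
apply/asboolP; exists [seq (i, 0) | i <- iota 0 I]; split => //; split.
- by rewrite size_map size_iota.
- by rewrite map_inj_uniq ?iota_uniq // => x y [].
- by apply/allP => p /mapP [i _ ->].
Qed.

Definition Theta (K0 I : nat) : nat := ex_minn (Theta_val_ex K0 I).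

From mathcomp Require Import all_boot all_order all_algebra.
From mathcomp Require Import ring lra zify.
From mathcomp Require Import boolp.
Import Order.TTheory GRing.Theory Num.Theory.

(* Write N = K0 + 1.  For any level t and any admissible s,
   t I <= sum_s ||p|| + sum_{p in box} (t - ||p||), where box = [0,t) x [0,K0]:
   pairs with k >= t contribute 0 to the deficit sum, and the others form a
   duplicate-free part of the box.  Taking t = K0 + q, with
   2I - K0 N = 2N q + r and 0 <= r < 2N, the box sum is an explicit cubic in
   K0 and q, and the resulting lower bound exceeds the claimed one by exactly
   r (2N - r) / (8N) >= 0. *)

Definition box (t n : nat) : seq (nat * nat) :=
  [seq (k, m) | k <- index_iota 0 t, m <- index_iota 0 n].

Lemma box_uniq t n : uniq (box t n).
Proof.
by rewrite allpairs_uniq ?iota_uniq // => [[a b] [c d]] _ _ /= [-> ->].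
Qed.

Lemma mem_box t n p : (p \in box t n) = (p.1 < t) && (p.2 < n).
Proof.
case: p => a b; apply/allpairsP/andP => /= [[[c d] [/= hc hd [-> ->]]]|[ha hb]].
  by move: hc hd; rewrite !mem_index_iota => /andP[_ ->] /andP[_ ->].
by exists (a, b); rewrite !mem_index_iota.
Qed.

Lemma sum_deficit_le_box t n (s : seq (nat * nat)) :
  uniq s -> all (fun p => p.2 < n) s ->
  \sum_(p <- s) (t - pnorm p) <= \sum_(p <- box t n) (t - pnorm p).
Proof.
move=> us sn.
have -> : \sum_(p <- s) (t - pnorm p) = \sum_(p <- s | p.1 < t) (t - pnorm p).
  rewrite [RHS]big_mkcond; apply: eq_bigr => p _.
  by case: ltnP => // le_t; apply/eqP; rewrite subn_eq0 (leq_trans le_t) ?leq_addr.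
apply: (@uniq_sub_le_big_cond _ addn leq leqnn (fun x y => leq_addr y x) 0 _ s (box t n) _ xpredT).
- exact: filter_uniq.
- by rewrite filter_predT box_uniq.
move=> p; rewrite filter_predT mem_filter mem_box => /andP[-> ps].
by rewrite (allP sn p ps).
Qed.

Lemma mul_size_le_sum_pnorm t n (s : seq (nat * nat)) :
  uniq s -> all (fun p => p.2 < n) s ->
  t * size s <= \sum_(p <- s) pnorm p + \sum_(p <- box t n) (t - pnorm p).
Proof.
move=> us sn; rewrite -sum1_size big_distrr /=.
apply: (@leq_trans (\sum_(p <- s) (pnorm p + (t - pnorm p)))).
  by apply: leq_sum => p _; rewrite muln1 -leq_subLR.
by rewrite big_split leq_add2l sum_deficit_le_box.
Qed.

Lemma Theta_lower_bound K0 I t :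
  t * I <= Theta K0 I + \sum_(p <- box t K0.+1) (t - pnorm p).
Proof.
rewrite /Theta; case: ex_minnP => S /asboolP [s [[<- us sK] <-]] _.
by rewrite mul_size_le_sum_pnorm.
Qed.

Lemma sum_sub_iota x t : x <= t -> 2 * \sum_(0 <= k < t) (x - k) = x * x.+1.
Proof.
move=> le_xt; rewrite (big_cat_nat (leq0n x) le_xt) /=.
rewrite [X in _ + X]big1_seq ?addn0; last first.
  by move=> k /andP[_]; rewrite mem_index_iota => /andP[le_xk _]; apply/eqP; lia.
elim: x {t le_xt} => [|x IH]; first by rewrite big_geq.
rewrite big_nat_recl // subn0.
under eq_bigr do rewrite subSS.
rewrite mulnDr IH; ring.
Qed.

Lemma box_deficit_sum K0 u :
  2 * \sum_(p <- box (K0 + u) K0.+1) ((K0 + u) - pnorm p) =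
  \sum_(0 <= j < K0.+1) (j + u) * (j + u).+1.
Proof.
rewrite /box big_allpairs exchange_big big_distrr /= big_nat_rev /=.
apply: eq_big_nat => m /andP[_ lt_mK]; rewrite add0n subSS.
rewrite -(@sum_sub_iota (m + u) (K0 + u)); last by lia.
by congr (2 * _); apply: eq_bigr => k _; rewrite /pnorm /=; lia.
Qed.

Local Open Scope ring_scope.

Lemma sum_consecutive_products (R : comPzRingType) (n u : nat) :
  ((\sum_(0 <= j < n) (j + u) * (j + u).+1)%N%:R : R) * 6 =
  n%:R * (n%:R - 1) * (2 * n%:R - 1) + 3 * (2 * u%:R + 1) * n%:R * (n%:R - 1)
  + 6 * n%:R * u%:R * (u%:R + 1).
Proof.
elim: n => [|n IH]; first by rewrite big_geq //; ring.
rewrite big_nat_recr //= natrD mulrDl IH natrM -!natr1 !natrD; ring.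
Qed.

Lemma bound_gap (F : realFieldType) (k i q r : F) :
  0 <= k -> 0 < i -> 2 * i = k * (k + 1) + 2 * q * (k + 1) + r ->
  (k + q) * i - ((k + 1) * k * (2 * k + 1) + 3 * (2 * q + 1) * (k + 1) * k
                 + 6 * (k + 1) * q * (q + 1)) / 12
  - i ^+ 2 / (2 * (k + 1))
    * (1 + (k - 1) * (k + 1) / i - k * (k + 2) * (k + 1) ^+ 2 / (12 * i ^+ 2))
  = r * (2 * (k + 1) - r) / (8 * (k + 1)).
Proof.
move=> k0 i0 hi.
have -> : r = 2 * i - k * (k + 1) - 2 * q * (k + 1) by rewrite hi; ring.
by field; apply/andP; split; apply: lt0r_neq0; lra.
Qed.

Theorem lemma12p2 (K0 L I : nat) :
  (3 <= K0)%N -> (2 <= L)%N -> (0 < I)%N -> (K0 * (K0 + 1) <= 2 * I)%N ->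
  ((Theta K0 I)%:R : rat) >=
    (I%:R ^+ 2 / (2 * (K0%:R + 1))) *
    (1 + (K0%:R - 1) * (K0%:R + 1) / I%:R
       - K0%:R * (K0%:R + 2) * (K0%:R + 1) ^+ 2 / (12 * I%:R ^+ 2)).
Proof.
move=> _ _ I_gt0 le_KI.
pose q := ((2 * I - K0 * K0.+1) %/ (2 * K0.+1))%N.
pose r := ((2 * I - K0 * K0.+1) %% (2 * K0.+1))%N.
have r_lt : (r < 2 * K0.+1)%N by rewrite ltn_pmod.
have euclid : (2 * I = K0 * K0.+1 + 2 * q * K0.+1 + r)%N.
  by have := divn_eq (2 * I - K0 * K0.+1) (2 * K0.+1); rewrite -/q -/r; nia.
pose W := (\sum_(p <- box (K0 + q) K0.+1) (K0 + q - pnorm p))%N.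
have W12 : (W%:R : rat) * 12 =
    (K0%:R + 1) * K0%:R * (2 * K0%:R + 1) + 3 * (2 * q%:R + 1) * (K0%:R + 1) * K0%:R
    + 6 * (K0%:R + 1) * q%:R * (q%:R + 1).
  have -> : (W%:R : rat) * 12 = (2 * W)%N%:R * 6 by rewrite natrM; ring.
  by rewrite box_deficit_sum sum_consecutive_products -natr1; ring.
have le_Theta : (K0 + q)%:R * I%:R - W%:R <= (Theta K0 I)%:R :> rat.
  by rewrite lerBlDr -natrM -natrD ler_nat Theta_lower_bound.
apply: le_trans le_Theta; rewrite -subr_ge0 natrD.
have K0_ge0 : (0 : rat) <= K0%:R by [].
rewrite -[W%:R](mulfK (_ : 12 != 0)) // W12 (@bound_gap _ _ _ _ r%:R) ?ltr0n //.
  have r_le : (r%:R : rat) <= 2 * (K0%:R + 1).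
    by rewrite natr1 -natrM ler_nat ltnW.
  by rewrite divr_ge0 ?mulr_ge0 ?subr_ge0 //; lra.
move: (congr1 (GRing.natmul (1 : rat)) euclid).
by rewrite !natrD !natrM natr1 => euclidR; lra.
Qed.
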